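(* Let $G$ be a compactly generated t.d.l.c. group and $(K,S)$ a generating pair of $G$. If there exists a proper almost $(G,K)$-invariant set $B\subseteq G/K$, then $e(G)>1$.
   Context: A generating pair $(K,S)$ consists of a compact open subgroup $K$ and a finite symmetric set $S\subset G\setminus K$ such that $S\cup K$ generates $G$. The rough Cayley graph $\Gamma(G,K,S)$ has vertex set $G/K$ and an edge joining $gK$ and $gsK$ for all $g\in G$, $s\in S$. The number of ends of a connected locally finite graph is the supremum over finite vertex sets $F$ of the number of infinite components after deleting $F$ and incident edges; $e(G)$ is the number of ends of a rough Cayley graph of $G$. A subset $B\subseteq G/K$ is almost $(G,K)$-invariant if $kB=B$ for all $k\in K$ and the symmetric difference $gB\,\triangle\,B$ is finite for all $g\in G$; it is proper if both $B$ and its complement $G/K\setminus B$ are infinite. *)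

From Stdlib Require Import List Classical.
Import ListNotations.

Record TopGroup := {
  tg_car :> Type;
  tg_mul : tg_car -> tg_car -> tg_car;
  tg_one : tg_car;
  tg_inv : tg_car -> tg_car;
  tg_assoc : forall x y z, tg_mul x (tg_mul y z) = tg_mul (tg_mul x y) z;
  tg_mul1l : forall x, tg_mul tg_one x = x;
  tg_mul1r : forall x, tg_mul x tg_one = x;
  tg_mulVl : forall x, tg_mul (tg_inv x) x = tg_one;
  tg_mulVr : forall x, tg_mul x (tg_inv x) = tg_one;
  tg_open : (tg_car -> Prop) -> Prop;
  tg_open_full : tg_open (fun _ => True);
  tg_open_inter : forall U V, tg_open U -> tg_open V ->
                  tg_open (fun x => U x /\ V x);
  tg_open_union : forall (I : Type) (U : I -> tg_car -> Prop),
                  (forall i, tg_open (U i)) -> tg_open (fun x => exists i, U i x);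
  tg_mul_cont : forall W, tg_open W -> forall x y, W (tg_mul x y) ->
                exists U V, tg_open U /\ tg_open V /\ U x /\ V y /\
                  (forall u v, U u -> V v -> W (tg_mul u v));
  tg_inv_cont : forall W, tg_open W -> tg_open (fun x => W (tg_inv x))
}.

Arguments tg_mul {t} _ _.
Arguments tg_one {t}.
Arguments tg_inv {t} _.
Arguments tg_open {t} _.

Section TopGroupDefs.
Variable G : TopGroup.

Definition hausdorff : Prop :=
  forall x y : G, x <> y -> exists U V, tg_open U /\ tg_open V /\ U x /\ V y /\
    (forall z, ~ (U z /\ V z)).

Definition compact (A : G -> Prop) : Prop :=
  forall (I : Type) (U : I -> G -> Prop), (forall i, tg_open (U i)) ->
    (forall x, A x -> exists i, U i x) ->
    exists l : list I, forall x, A x -> exists i, In i l /\ U i x.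

Definition connected (A : G -> Prop) : Prop :=
  ~ exists U V, tg_open U /\ tg_open V /\
      (exists x, A x /\ U x) /\ (exists y, A y /\ V y) /\
      (forall x, A x -> U x \/ V x) /\ (forall x, A x -> ~ (U x /\ V x)).

Definition totally_disconnected : Prop :=
  forall A, connected A -> forall x y, A x -> A y -> x = y.

Definition locally_compact : Prop :=
  forall x : G, exists U C, tg_open U /\ U x /\ compact C /\ (forall y, U y -> C y).

Definition tdlc : Prop := hausdorff /\ totally_disconnected /\ locally_compact.

Inductive generated (C : G -> Prop) : G -> Prop :=
  | gen_in x : C x -> generated C x
  | gen_one : generated C tg_one
  | gen_mul x y : generated C x -> generated C y -> generated C (tg_mul x y)
  | gen_inv x : generated C x -> generated C (tg_inv x).

Definition compactly_generated : Prop :=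
  exists C, compact C /\ forall x, generated C x.

Definition subgroup (K : G -> Prop) : Prop :=
  K tg_one /\ (forall x y, K x -> K y -> K (tg_mul x y)) /\
  (forall x, K x -> K (tg_inv x)).

Definition compact_open_subgroup (K : G -> Prop) : Prop :=
  subgroup K /\ tg_open K /\ compact K.

Definition generating_pair (K : G -> Prop) (S : list G) : Prop :=
  compact_open_subgroup K /\
  (forall s, In s S -> In (tg_inv s) S) /\
  (forall s, In s S -> ~ K s) /\
  (forall x, generated (fun y => In y S \/ K y) x).

(* Cosets: the vertex gK of G/K is represented by any g; gK = hK iff g^-1 h in K *)
Definition coset_eq (K : G -> Prop) (g h : G) : Prop := K (tg_mul (tg_inv g) h).

(* A subset of G/K, represented as a predicate on G constant on cosets *)
Definition coset_set (K : G -> Prop) (B : G -> Prop) : Prop :=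
  forall x y, coset_eq K x y -> (B x <-> B y).

Definition finite_cosets (K : G -> Prop) (A : G -> Prop) : Prop :=
  exists l : list G, forall x, A x -> exists y, In y l /\ coset_eq K y x.

Definition infinite_cosets (K : G -> Prop) (A : G -> Prop) : Prop :=
  ~ finite_cosets K A.

Definition translate (g : G) (B : G -> Prop) : G -> Prop :=
  fun x => B (tg_mul (tg_inv g) x).

Definition symdiff (A B : G -> Prop) : G -> Prop :=
  fun x => (A x /\ ~ B x) \/ (~ A x /\ B x).

Definition almost_invariant (K : G -> Prop) (B : G -> Prop) : Prop :=
  coset_set K B /\
  (forall k, K k -> forall x, translate k B x <-> B x) /\
  (forall g, finite_cosets K (symdiff (translate g B) B)).

Definition proper_set (K : G -> Prop) (B : G -> Prop) : Prop :=
  infinite_cosets K B /\ infinite_cosets K (fun x => ~ B x).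

(* Rough Cayley graph Gamma(G,K,S): edge between gK and gsK for all g, s in S *)
Definition rc_adj (K : G -> Prop) (S : list G) (x y : G) : Prop :=
  exists g, coset_eq K x g /\ exists s, In s S /\ coset_eq K (tg_mul g s) y.

Definition avoid (K : G -> Prop) (F : list G) (x : G) : Prop :=
  forall f, In f F -> ~ coset_eq K f x.

Inductive rc_reach (K : G -> Prop) (S : list G) (F : list G) : G -> G -> Prop :=
  | reach_refl x y : avoid K F x -> coset_eq K x y -> rc_reach K S F x y
  | reach_step x y z : rc_reach K S F x y -> rc_adj K S y z -> avoid K F z ->
                       rc_reach K S F x z.

(* the number of ends of Gamma(G,K,S) is > 1: some finite vertex set F has
   at least two distinct infinite components in its complement *)
Definition more_than_one_end (K : G -> Prop) (S : list G) : Prop :=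
  exists (F : list G) (x y : G),
    avoid K F x /\ avoid K F y /\ ~ rc_reach K S F x y /\
    infinite_cosets K (rc_reach K S F x) /\ infinite_cosets K (rc_reach K S F y).

End TopGroupDefs.

(* The coboundary of an almost invariant set has finitely many edges, but edges
   [gK -- gsK] are right translates while almost invariance is about left
   translates; so we work with B' := {x | x^-1 K in B}, for which an edge
   leaving B' from xK yields x^-1 K in B \ sB, and a set of finitely many left
   cosets stays finite under inversion because every double coset KhK is a
   finite union of left cosets (K is compact open).  Removing from the graph
   the finitely many vertices on the boundary of B' (plus a base point)
   separates B' from its complement.  Since the graph is connected, every
   remaining vertex is joined to one of the finitely many neighbours of the
   removed set, so the infinite sets B' and G/K \ B' each meet an infinite
   component, and these components are different. *)

From Stdlib Require Import List Classical PropExtensionality FunctionalExtensionality.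
Import ListNotations.

Section GroupLemmas.
Variable G : TopGroup.

Lemma mulKVg (x y : G) : tg_mul x (tg_mul (tg_inv x) y) = y.
Proof. rewrite tg_assoc, tg_mulVr, tg_mul1l. reflexivity. Qed.

Lemma mulKg (x y : G) : tg_mul (tg_inv x) (tg_mul x y) = y.
Proof. rewrite tg_assoc, tg_mulVl, tg_mul1l. reflexivity. Qed.

Lemma mulgK (x y : G) : tg_mul (tg_mul x y) (tg_inv y) = x.
Proof. rewrite <- tg_assoc, tg_mulVr, tg_mul1r. reflexivity. Qed.

Lemma mulgKV (x y : G) : tg_mul (tg_mul x (tg_inv y)) y = x.
Proof. rewrite <- tg_assoc, tg_mulVl, tg_mul1r. reflexivity. Qed.

Lemma mulg_eq1_inv (x y : G) : tg_mul x y = tg_one -> y = tg_inv x.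
Proof. intro H. rewrite <- (mulKg x y), H, tg_mul1r. reflexivity. Qed.

Lemma invgK (x : G) : tg_inv (tg_inv x) = x.
Proof. symmetry. apply mulg_eq1_inv, tg_mulVl. Qed.

Lemma invMg (x y : G) : tg_inv (tg_mul x y) = tg_mul (tg_inv y) (tg_inv x).
Proof. symmetry. apply mulg_eq1_inv. rewrite tg_assoc, mulgK. apply tg_mulVr. Qed.

Lemma open_local (W : G -> Prop) :
  (forall x, W x -> exists U, tg_open U /\ U x /\ forall y, U y -> W y) -> tg_open W.
Proof.
  intro Hloc.
  pose (I := {U : G -> Prop | tg_open U /\ forall y, U y -> W y}).
  replace W with (fun x => exists i : I, proj1_sig i x).
  - apply tg_open_union. intro i. exact (proj1 (proj2_sig i)).
  - apply functional_extensionality; intro x; apply propositional_extensionality; split.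
    + intros [[U [HU HUW]] Ux]. exact (HUW x Ux).
    + intro Wx. destruct (Hloc x Wx) as [U [HU [Ux HUW]]].
      exists (exist _ U (conj HU HUW)). exact Ux.
Qed.

Lemma open_preim_mul2 (W : G -> Prop) (a b : G) :
  tg_open W -> tg_open (fun u => W (tg_mul a (tg_mul u b))).
Proof.
  intro HW. apply open_local. intros u Wu.
  destruct (tg_mul_cont G W HW a (tg_mul u b) Wu) as [U1 [V1 [_ [HV1 [U1a [V1ub H1]]]]]].
  destruct (tg_mul_cont G V1 HV1 u b V1ub) as [U2 [V2 [HU2 [_ [U2u [V2b H2]]]]]].
  exists U2. split; [exact HU2 | split; [exact U2u |]].
  intros y U2y. apply H1; auto.
Qed.

End GroupLemmas.

Arguments mulKVg {G}.
Arguments mulKg {G}.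
Arguments mulgK {G}.
Arguments mulgKV {G}.
Arguments invgK {G}.
Arguments invMg {G}.

Section Cosets.
Variables (G : TopGroup) (K : G -> Prop).
Hypothesis HK : subgroup G K.

Lemma coset_eq_refl (x : G) : coset_eq G K x x.
Proof. unfold coset_eq. rewrite tg_mulVl. apply HK. Qed.

Lemma coset_eq_sym (x y : G) : coset_eq G K x y -> coset_eq G K y x.
Proof.
  unfold coset_eq. intro Kxy. destruct HK as [_ [_ HKinv]].
  apply HKinv in Kxy. rewrite invMg, invgK in Kxy. exact Kxy.
Qed.

Lemma coset_eq_trans (x y z : G) :
  coset_eq G K x y -> coset_eq G K y z -> coset_eq G K x z.
Proof.
  unfold coset_eq. intros Kxy Kyz. destruct HK as [_ [HKmul _]].
  pose proof (HKmul _ _ Kxy Kyz) as Kxz. rewrite <- tg_assoc, mulKVg in Kxz. exact Kxz.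
Qed.

Lemma finite_cosets_list (l : list G) :
  finite_cosets G K (fun x => exists f, In f l /\ coset_eq G K f x).
Proof. exists l. intros x Hx. exact Hx. Qed.

Lemma finite_cosets_or (P Q : G -> Prop) :
  finite_cosets G K P -> finite_cosets G K Q ->
  finite_cosets G K (fun x => P x \/ Q x).
Proof.
  intros [l1 H1] [l2 H2]. exists (l1 ++ l2). intros x [Px | Qx].
  - destruct (H1 x Px) as [y [? ?]]. exists y. split; auto. apply in_or_app; auto.
  - destruct (H2 x Qx) as [y [? ?]]. exists y. split; auto. apply in_or_app; auto.
Qed.

Lemma finite_cosets_bigcup (T : Type) (l : list T) (P : T -> G -> Prop) :
  (forall t, In t l -> finite_cosets G K (P t)) ->
  finite_cosets G K (fun x => exists t, In t l /\ P t x).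
Proof.
  induction l as [| t l IH]; intro Hfin.
  - exists []. intros x [t [[] _]].
  - destruct (finite_cosets_or (P t) (fun x => exists t', In t' l /\ P t' x))
      as [l' Hl'].
    + apply Hfin. left. reflexivity.
    + apply IH. intros t' Ht'. apply Hfin. right. exact Ht'.
    + exists l'. intros x [t' [[<- | Ht'] Pt'x]]; apply Hl'; eauto.
Qed.

Lemma finite_cosets_coset_sub (P Q : G -> Prop) :
  finite_cosets G K Q -> (forall x, P x -> exists g, coset_eq G K g x /\ Q g) ->
  finite_cosets G K P.
Proof.
  intros [l Hl] HPQ. exists l. intros x Px. destruct (HPQ x Px) as [g [Hgx Qg]].
  destruct (Hl g Qg) as [y [Hy Hyg]]. exists y. split; auto.
  eapply coset_eq_trans; eauto.
Qed.

Lemma finite_cosets_sub (P Q : G -> Prop) :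
  finite_cosets G K Q -> (forall x, P x -> Q x) -> finite_cosets G K P.
Proof.
  intros HQ HPQ. apply (finite_cosets_coset_sub P Q HQ). intros x Px.
  exists x. split; auto. apply coset_eq_refl.
Qed.

Lemma infinite_cosets_inhabited (A : G -> Prop) : infinite_cosets G K A -> exists x, A x.
Proof.
  intro Hinf. apply NNPP. intro Hempty. apply Hinf.
  exists []. intros x Ax. exfalso. eauto.
Qed.

Lemma infinite_cosets_pigeonhole (l : list G) (R : G -> G -> Prop) (A : G -> Prop) :
  infinite_cosets G K A -> (forall x, A x -> exists y, In y l /\ R y x) ->
  exists y, In y l /\ infinite_cosets G K (fun x => A x /\ R y x).
Proof.
  intros Hinf Hcover. apply NNPP. intro Hnone. apply Hinf.
  eapply finite_cosets_sub; [apply (finite_cosets_bigcup G l (fun y x => A x /\ R y x)) |].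
  - intros y Hy. apply NNPP. intro Hy_inf. apply Hnone. eauto.
  - intros x Ax. destruct (Hcover x Ax) as [y [Hy Ryx]]. eauto.
Qed.

Section CompactOpen.
Hypotheses (HKopen : tg_open K) (HKcompact : compact G K).

(* The open sets [{u | u h K = k h K}], k in K, cover K; compactness leaves finitely many. *)
Lemma double_coset_finite (h : G) :
  finite_cosets G K (fun x => exists k, K k /\ coset_eq G K (tg_mul k h) x).
Proof.
  destruct (HKcompact G (fun k u => K (tg_mul (tg_inv (tg_mul k h)) (tg_mul u h))))
    as [l Hl].
  - intro k. apply open_preim_mul2. exact HKopen.
  - intros k Kk. exists k. rewrite tg_mulVl. apply HK.
  - exists (map (fun k => tg_mul k h) l). intros x [k [Kk Hkx]].
    destruct (Hl k Kk) as [j [Hj Hjk]]. exists (tg_mul j h). split.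
    + apply in_map with (f := fun k => tg_mul k h). exact Hj.
    + eapply coset_eq_trans; [exact Hjk | exact Hkx].
Qed.

Lemma finite_cosets_inv (P Q : G -> Prop) :
  finite_cosets G K Q -> (forall x, P x -> Q (tg_inv x)) -> finite_cosets G K P.
Proof.
  intros [l Hl] HPQ.
  eapply finite_cosets_sub; [apply (finite_cosets_bigcup G l (fun y x =>
    exists k, K k /\ coset_eq G K (tg_mul k (tg_inv y)) x)) |].
  - intros y _. apply double_coset_finite.
  - intros x Px. destruct (Hl _ (HPQ x Px)) as [y [Hy Hyx]]. exists y. split; auto.
    exists (tg_inv (tg_mul (tg_inv y) (tg_inv x))). split.
    + apply HK. exact Hyx.
    + rewrite invMg, !invgK, mulgK. apply coset_eq_refl.
Qed.

End CompactOpen.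
End Cosets.

Section RoughCayleyGraph.
Variables (G : TopGroup) (K : G -> Prop) (S : list G).
Hypothesis HK : subgroup G K.
Hypothesis HSsym : forall s, In s S -> In (tg_inv s) S.

Lemma avoid_coset_eq F (x y : G) :
  avoid G K F x -> coset_eq G K x y -> avoid G K F y.
Proof.
  intros Hx Hxy f Hf Hfy. apply (Hx f Hf).
  eapply coset_eq_trans; [exact HK | exact Hfy |]. apply coset_eq_sym; auto.
Qed.

Lemma rc_adj_coset_eql (x x' y : G) :
  coset_eq G K x x' -> rc_adj G K S x y -> rc_adj G K S x' y.
Proof.
  intros Hxx' [g [Hxg Hg]]. exists g. split; auto.
  eapply coset_eq_trans; [exact HK | | exact Hxg]. apply coset_eq_sym; auto.
Qed.

Lemma rc_adj_coset_eqr (x y y' : G) :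
  rc_adj G K S x y -> coset_eq G K y y' -> rc_adj G K S x y'.
Proof.
  intros [g [Hxg [s [Hs Hgsy]]]] Hyy'. exists g. split; auto.
  exists s. split; auto. eapply coset_eq_trans; eauto.
Qed.

Lemma rc_adj_sym (x y : G) : rc_adj G K S x y -> rc_adj G K S y x.
Proof.
  intros [g [Hxg [s [Hs Hgsy]]]]. exists (tg_mul g s). split.
  - apply coset_eq_sym; auto.
  - exists (tg_inv s). split; auto. rewrite mulgK. apply coset_eq_sym; auto.
Qed.

Lemma rc_adj_mulr (y s : G) : In s S -> rc_adj G K S y (tg_mul y s).
Proof.
  intro Hs. exists y. split; [apply coset_eq_refl; auto |].
  exists s. split; auto. apply coset_eq_refl; auto.
Qed.

Lemma rc_reach_avoid F (a b : G) :
  rc_reach G K S F a b -> avoid G K F a /\ avoid G K F b.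
Proof.
  induction 1 as [x y Hx Hxy | x y z _ IH _ Hz]; split; try tauto.
  eapply avoid_coset_eq; eauto.
Qed.

Lemma rc_reach_coset_eqr F (a b c : G) :
  rc_reach G K S F a b -> coset_eq G K b c -> rc_reach G K S F a c.
Proof.
  intros [x y Hx Hxy | x y z Hxy Hyz Hz] Hc.
  - apply reach_refl; auto. eapply coset_eq_trans; eauto.
  - eapply reach_step; [exact Hxy | eapply rc_adj_coset_eqr; eauto |].
    eapply avoid_coset_eq; eauto.
Qed.

Lemma rc_reach_coset_eql F (a a' b : G) :
  rc_reach G K S F a b -> coset_eq G K a' a -> rc_reach G K S F a' b.
Proof.
  intros Hab; revert a'.
  induction Hab as [x y Hx Hxy | x y z _ IH Hyz Hz]; intros a' Ha'.
  - apply reach_refl.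
    + eapply avoid_coset_eq; [exact Hx |]. apply coset_eq_sym; auto.
    + eapply coset_eq_trans; eauto.
  - eapply reach_step; eauto.
Qed.

(* Connectedness of the rough Cayley graph; this is where S and K generating G enters. *)
Lemma rc_adj_closed_all (P : G -> Prop) (x0 : G) :
  (forall x, generated G (fun y => In y S \/ K y) x) ->
  (forall x y, coset_eq G K x y -> P x -> P y) ->
  (forall x y, rc_adj G K S x y -> P x -> P y) ->
  P x0 -> forall x, P x.
Proof.
  intros Hgen Hcoset Hadj Px0 x.
  assert (Hmul : forall w, generated G (fun y => In y S \/ K y) w ->
                   forall y, P y <-> P (tg_mul y w)).
  { induction 1 as [w [Hw | Hw] | | w v _ IHw _ IHv | w _ IH]; intro y.
    - split; apply Hadj; [apply rc_adj_mulr; exact Hw |].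
      apply rc_adj_sym, rc_adj_mulr. exact Hw.
    - assert (Hyw : coset_eq G K y (tg_mul y w)).
      { unfold coset_eq. rewrite mulKg. exact Hw. }
      split; apply Hcoset; [| apply coset_eq_sym; auto]; exact Hyw.
    - rewrite tg_mul1r. tauto.
    - rewrite (IHw y), (IHv (tg_mul y w)), tg_assoc. tauto.
    - rewrite (IH (tg_mul y (tg_inv w))), mulgKV. tauto. }
  rewrite <- (mulKVg x0 x). apply Hmul; [apply Hgen | exact Px0].
Qed.

Definition outer_boundary (F : list G) (n : G) : Prop :=
  avoid G K F n /\ exists f, In f F /\ rc_adj G K S f n.

Lemma rc_reach_from_outer_boundary (F : list G) (f0 : G) :
  (forall x, generated G (fun y => In y S \/ K y) x) -> In f0 F ->
  forall x, avoid G K F x -> exists n, outer_boundary F n /\ rc_reach G K S F n x.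
Proof.
  intros Hgen Hf0.
  set (P := fun x => (exists f, In f F /\ coset_eq G K f x) \/
                     exists n, outer_boundary F n /\ rc_reach G K S F n x).
  assert (HP : forall x, P x).
  { apply (rc_adj_closed_all P f0 Hgen).
    - intros x y Hxy [[f [Hf Hfx]] | [n [Hn Hnx]]].
      + left. exists f. split; auto. eapply coset_eq_trans; eauto.
      + right. exists n. split; auto. eapply rc_reach_coset_eqr; eauto.
    - intros x y Hxy Px.
      destruct (classic (avoid G K F y)) as [Hy | Hy]; [right | left].
      + destruct Px as [[f [Hf Hfx]] | [n [Hn Hnx]]].
        * exists y. split; [split; auto |].
          -- exists f. split; auto. eapply rc_adj_coset_eql; [| exact Hxy].
             apply coset_eq_sym; auto.
          -- apply reach_refl; auto. apply coset_eq_refl; auto.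
        * exists n. split; auto. eapply reach_step; eauto.
      + apply NNPP. intro Hn. apply Hy. intros f Hf Hfy. apply Hn. eauto.
    - left. exists f0. split; auto. apply coset_eq_refl; auto. }
  intros x Hx. destruct (HP x) as [[f [Hf Hfx]] | Hreach]; [| exact Hreach].
  exfalso. exact (Hx f Hf Hfx).
Qed.

Lemma rc_reach_coset_set_iff (F : list G) (C : G -> Prop) :
  coset_set G K C ->
  (forall x y, C x -> rc_adj G K S x y -> ~ C y -> ~ avoid G K F x) ->
  forall a b, rc_reach G K S F a b -> (C a <-> C b).
Proof.
  intros HC Hbd. induction 1 as [x y _ Hxy | x y z Hxy IH Hyz Hz]; [apply HC; exact Hxy |].
  destruct (rc_reach_avoid F x y Hxy) as [_ Hy].
  rewrite IH. split; intro HCyz; apply NNPP; intro HnC.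
  - exact (Hbd y z HCyz Hyz HnC Hy).
  - exact (Hbd z y HCyz (rc_adj_sym y z Hyz) HnC Hz).
Qed.

Section CompactOpen.
Hypotheses (HKopen : tg_open K) (HKcompact : compact G K).

Lemma finite_cosets_rc_adj (f : G) : finite_cosets G K (rc_adj G K S f).
Proof.
  eapply finite_cosets_sub; [exact HK | apply (finite_cosets_bigcup G K G S (fun s y =>
    exists k, K k /\ coset_eq G K (tg_mul f (tg_mul k s)) y)) |].
  - intros s _. destruct (double_coset_finite G K HK HKopen HKcompact s) as [l Hl].
    exists (map (tg_mul f) l). intros y [k [Kk Hy]].
    destruct (Hl (tg_mul k s) (ex_intro _ k (conj Kk (coset_eq_refl G K HK _))))
      as [y0 [Hy0 Hy0ks]].
    exists (tg_mul f y0). split; [apply in_map; exact Hy0 |].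
    eapply coset_eq_trans; [exact HK | | exact Hy].
    unfold coset_eq in *. rewrite invMg, <- tg_assoc, mulKg. exact Hy0ks.
  - intros y [g [Hfg [s [Hs Hgsy]]]]. exists s. split; auto.
    exists (tg_mul (tg_inv f) g). split; [exact Hfg |].
    rewrite tg_assoc, mulKVg. exact Hgsy.
Qed.

Lemma finite_cosets_outer_boundary (F : list G) : finite_cosets G K (outer_boundary F).
Proof.
  eapply finite_cosets_sub;
    [exact HK | apply (finite_cosets_bigcup G K G F (fun f n => rc_adj G K S f n)) |].
  - intros f _. apply finite_cosets_rc_adj.
  - intros n [_ [f [Hf Hfn]]]. eauto.
Qed.

Lemma infinite_component (F : list G) (f0 : G) (C : G -> Prop) :
  (forall x, generated G (fun y => In y S \/ K y) x) -> In f0 F ->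
  infinite_cosets G K C ->
  exists y x, C x /\ rc_reach G K S F y x /\ infinite_cosets G K (rc_reach G K S F y).
Proof.
  intros Hgen Hf0 HC.
  assert (HCF : infinite_cosets G K (fun x => C x /\ avoid G K F x)).
  { intro Hfin. apply HC. eapply finite_cosets_sub;
      [exact HK | apply (finite_cosets_or G K _ _ Hfin (finite_cosets_list G K F)) |].
    intros x Cx. destruct (classic (avoid G K F x)) as [Hx | Hx]; [left; auto | right].
    apply NNPP. intro Hn. apply Hx. intros f Hf Hfx. apply Hn. eauto. }
  destruct (finite_cosets_outer_boundary F) as [lN HlN].
  destruct (infinite_cosets_pigeonhole G K HK lN (rc_reach G K S F) _ HCF) as [y [_ Hinf]].
  - intros x [_ Hx]. destruct (rc_reach_from_outer_boundary F f0 Hgen Hf0 x Hx)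
      as [n [Hn Hnx]].
    destruct (HlN n Hn) as [y [Hy Hyn]]. exists y. split; auto.
    eapply rc_reach_coset_eql; eauto.
  - destruct (infinite_cosets_inhabited G K _ Hinf) as [x [[Cx _] Hyx]].
    exists y, x. repeat split; auto. intro Hfin. apply Hinf.
    eapply finite_cosets_sub; [exact HK | exact Hfin | tauto].
Qed.

End CompactOpen.
End RoughCayleyGraph.

Section InvertedAlmostInvariantSet.
Variables (G : TopGroup) (K : G -> Prop) (S : list G) (B : G -> Prop).
Hypotheses (HK : subgroup G K) (HKopen : tg_open K) (HKcompact : compact G K).
Hypothesis HB : almost_invariant G K B.

Definition inv_set (x : G) : Prop := B (tg_inv x).

Lemma coset_set_inv_set : coset_set G K inv_set.
Proof.
  intros x y Hxy. destruct HB as [_ [HKinv _]].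
  pose proof (HKinv _ Hxy (tg_inv x)) as Hx. unfold translate in Hx.
  rewrite invMg, invgK, mulgK in Hx. unfold inv_set. tauto.
Qed.

Lemma proper_set_inv_set : proper_set G K B -> proper_set G K inv_set.
Proof.
  intros [HB1 HB2]. split; intro Hfin; [apply HB1 | apply HB2];
    apply (finite_cosets_inv G K HK HKopen HKcompact _ _ Hfin);
    intro x; unfold inv_set; rewrite invgK; tauto.
Qed.

(* x in inv_set with xs outside means x^-1 in B \ sB, and finitely many s. *)
Lemma finite_cosets_inner_boundary_inv_set :
  finite_cosets G K (fun x => inv_set x /\ exists y, rc_adj G K S x y /\ ~ inv_set y).
Proof.
  destruct HB as [_ [_ Hsymdiff]].
  set (Q := fun z => exists s, In s S /\ symdiff G (translate G s B) B z).
  assert (HQ : finite_cosets G K Q).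
  { apply (finite_cosets_bigcup G K G S). intros s _. apply Hsymdiff. }
  assert (HQinv : finite_cosets G K (fun g => Q (tg_inv g))).
  { apply (finite_cosets_inv G K HK HKopen HKcompact _ _ HQ). tauto. }
  apply (finite_cosets_coset_sub G K HK _ _ HQinv).
  intros x [Bx [y [[g [Hxg [s [Hs Hgsy]]]] Hy]]].
  exists g. split; [apply coset_eq_sym; auto |]. exists s. split; auto. right. split.
  - unfold translate. rewrite <- invMg. intro Hgs. apply Hy.
    apply (coset_set_inv_set _ _ Hgsy). exact Hgs.
  - apply (coset_set_inv_set _ _ Hxg). exact Bx.
Qed.

End InvertedAlmostInvariantSet.

Theorem lemma4p3 (G : TopGroup) (K : G -> Prop) (S : list G) :
  tdlc G -> compactly_generated G -> generating_pair G K S ->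
  (exists B : G -> Prop, almost_invariant G K B /\ proper_set G K B) ->
  more_than_one_end G K S.
Proof.
  intros _ _ [[HK [HKopen HKcompact]] [HSsym [_ Hgen]]] [B [HB HBproper]].
  set (C := inv_set G B).
  destruct (proper_set_inv_set G K B HK HKopen HKcompact HBproper) as [HCinf HCcinf].
  destruct (finite_cosets_inner_boundary_inv_set G K S B HK HKopen HKcompact HB)
    as [lD HlD].
  set (F := tg_one :: lD).
  assert (HF1 : In tg_one F) by (left; reflexivity).
  assert (Hsep : forall a b, rc_reach G K S F a b -> (C a <-> C b)).
  { apply rc_reach_coset_set_iff; [exact HK | exact HSsym |
      apply (coset_set_inv_set G K B HB) |].
    intros x y Cx Hxy HnCy Hx. destruct (HlD x (conj Cx (ex_intro _ y (conj Hxy HnCy))))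
      as [w [Hw Hwx]].
    exact (Hx w (or_intror Hw) Hwx). }
  destruct (infinite_component G K S HK HSsym HKopen HKcompact F tg_one C Hgen HF1 HCinf)
    as [y1 [x1 [Cx1 [Hr1 Hinf1]]]].
  destruct (infinite_component G K S HK HSsym HKopen HKcompact F tg_one _ Hgen HF1 HCcinf)
    as [y2 [x2 [Cx2 [Hr2 Hinf2]]]].
  exists F, y1, y2. repeat split; auto;
    [exact (proj1 (rc_reach_avoid G K S HK F _ _ Hr1)) |
     exact (proj1 (rc_reach_avoid G K S HK F _ _ Hr2)) |].
  intro H12. apply Cx2, (Hsep _ _ Hr2), (Hsep _ _ H12), (Hsep _ _ Hr1), Cx1.
Qed.
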